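(* For all integers $m,n\ge 0$, $$\binom{m+n}{m}H_{n+m}=\sum_{k=0}^{n}H_k\binom{m+n-k-1}{n-k}+H_m\binom{n+m}{n},$$ where $H_j$ denotes the $j$-th harmonic number.
   Context: The harmonic numbers are $H_0=0$ and $H_j=1+\frac12+\cdots+\frac1j$ for $j\ge 1$. Binomial coefficients are the generalized ones: for any integer $a$ (possibly negative) and integer $j\ge 0$, $\binom{a}{j}=\frac{a(a-1)\cdots(a-j+1)}{j!}$, with $\binom{a}{0}=1$; in particular $\binom{-1}{0}=1$. *)

From mathcomp Require Import all_boot all_order all_algebra.
Set Implicit Arguments. Unset Strict Implicit. Unset Printing Implicit Defensive.
Import Order.TTheory GRing.Theory Num.Theory.
Local Open Scope ring_scope.

Definition harmonic (j : nat) : rat := \sum_(1 <= i < j.+1) (i%:R)^-1.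

Definition gbinom (a : int) (j : nat) : rat :=
  (\prod_(i < j) (a%:~R - (i : nat)%:R)) / (j`!)%:R.

(* Moving the H_m term to the left, the claim is that the convolution
   sum_k H_k C(m+n-k-1, n-k) equals C(m+n, m) (H_{m+n} - H_m).  Both sides
   satisfy Pascal's recurrence in (m, n) and agree on the axes m = 0 and
   n = 0, hence everywhere. *)

From mathcomp Require Import all_boot all_order all_algebra.
From mathcomp Require Import ring zify.
Import Order.TTheory GRing.Theory Num.Theory.
Local Open Scope ring_scope.

Lemma pascal_eq (V : nmodType) (f g : nat -> nat -> V) :
  (forall n, f 0%N n = g 0%N n) -> (forall m, f m 0%N = g m 0%N) ->
  (forall m n, f m.+1 n.+1 = f m.+1 n + f m n.+1) ->
  (forall m n, g m.+1 n.+1 = g m.+1 n + g m n.+1) ->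
  forall m n, f m n = g m n.
Proof.
move=> eq0n eqn0 fS gS; elim=> [|m IHm] n; first exact: eq0n.
elim: n => [|n IHn]; first exact: eqn0.
by rewrite fS gS IHn IHm.
Qed.

Lemma harmonic0 : harmonic 0 = 0.
Proof. by rewrite /harmonic big_geq. Qed.

Lemma harmonicS n : harmonic n.+1 = harmonic n + n.+1%:R^-1.
Proof. by rewrite /harmonic big_nat_recr. Qed.

Lemma prod_natrB_ffact (R : pzRingType) (a j : nat) :
  \prod_(i < j) (a%:R - i%:R : R) = (a ^_ j)%:R.
Proof.
elim: j => [|j IHj]; first by rewrite big_ord0.
rewrite big_ord_recr /= IHj ffactnSr natrM.
have [le_ja | lt_aj] := leqP j a; first by rewrite natrB.
by rewrite ffact_small // !mul0r.
Qed.

Lemma gbinom0 a : gbinom a 0 = 1.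
Proof. by rewrite /gbinom big_ord0 divr1. Qed.

Lemma gbinom_nat (a j : nat) : gbinom a%:Z j = 'C(a, j)%:R.
Proof.
rewrite /gbinom prod_natrB_ffact -bin_ffact natrM mulfK //.
by rewrite pnatr_eq0 -lt0n fact_gt0.
Qed.

(* [gbinom (-1) j = (-1)^j], so the hypothesis cannot be dropped. *)
Lemma gbinom_subz1 (a j : nat) :
  (0 < a)%N || (j == 0)%N -> gbinom (a%:Z - 1) j = 'C(a.-1, j)%:R.
Proof.
case: a => [/= /eqP -> | a _]; first by rewrite gbinom0 bin0.
have -> : a.+1%:Z - 1 = a%:Z by lia.
exact: gbinom_nat.
Qed.

Lemma bin_divS (R : numFieldType) (N m : nat) :
  'C(N.+1, m.+1)%:R / N.+1%:R = 'C(N, m)%:R / m.+1%:R :> R.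
Proof.
apply/eqP; rewrite eqr_div ?pnatr_eq0 // -!natrM mulnC.
by rewrite -(mul_bin_diag N.+1) mulnC.
Qed.

Definition harmonic_conv (m n : nat) : rat :=
  \sum_(0 <= k < n.+1) harmonic k * 'C((m + n - k).-1, n - k)%:R.

Definition harmonic_gap (m n : nat) : rat :=
  'C(m + n, m)%:R * (harmonic (m + n) - harmonic m).

Lemma harmonic_conv0n n : harmonic_conv 0 n = harmonic n.
Proof.
rewrite /harmonic_conv big_nat_recr //= subnn bin0 mulr1 big1_seq ?add0r //.
move=> k; rewrite mem_index_iota => /andP[_ lt_kn].
by rewrite bin_small ?mulr0 //; lia.
Qed.

Lemma harmonic_convn0 m : harmonic_conv m 0 = 0.
Proof. by rewrite /harmonic_conv big_nat1 harmonic0 mul0r. Qed.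

Lemma harmonic_convSS m n :
  harmonic_conv m.+1 n.+1 = harmonic_conv m.+1 n + harmonic_conv m n.+1.
Proof.
rewrite /harmonic_conv big_nat_recr //= [X in _ = _ + X]big_nat_recr //=.
rewrite !subnn !bin0 !mulr1 addrA -big_split /=; congr (_ + _).
apply: eq_big_nat => k /andP[_ le_kn].
have -> : ((m.+1 + n.+1 - k).-1 = (m + n - k).+1)%N by lia.
have -> : (n.+1 - k = (n - k).+1)%N by lia.
have -> : ((m.+1 + n - k).-1 = m + n - k)%N by lia.
have -> : ((m + n.+1 - k).-1 = m + n - k)%N by lia.
by rewrite binS natrD mulrDr addrC.
Qed.

Lemma harmonic_gap0n n : harmonic_gap 0 n = harmonic n.
Proof. by rewrite /harmonic_gap bin0 harmonic0 subr0 mul1r. Qed.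

Lemma harmonic_gapn0 m : harmonic_gap m 0 = 0.
Proof. by rewrite /harmonic_gap addn0 subrr mulr0. Qed.

Lemma harmonic_gapSS m n :
  harmonic_gap m.+1 n.+1 = harmonic_gap m.+1 n + harmonic_gap m n.+1.
Proof.
rewrite /harmonic_gap addSn addnS addSn; set N := (m + n).+1.
(* LHS - RHS = C(N+1, m+1) / (N+1) - C(N, m) / (m+1), which vanishes. *)
rewrite (harmonicS N) (harmonicS m) -[RHS]addr0 -(subrr ('C(N, m)%:R / m.+1%:R)).
by rewrite -{1}(bin_divS rat N m) binS natrD; ring.
Qed.

Lemma harmonic_conv_gap m n : harmonic_conv m n = harmonic_gap m n.
Proof.
apply: pascal_eq => {m n} [n | m | m n | m n].
- by rewrite harmonic_conv0n harmonic_gap0n.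
- by rewrite harmonic_convn0 harmonic_gapn0.
- exact: harmonic_convSS.
- exact: harmonic_gapSS.
Qed.

Theorem theorem2p2 (m n : nat) :
  gbinom (m + n)%N%:Z m * harmonic (n + m) =
  \sum_(0 <= k < n.+1)
     harmonic k * gbinom ((m + n)%N%:Z - k%:Z - 1) (n - k)
  + harmonic m * gbinom (n + m)%N%:Z n.
Proof.
have -> : \sum_(0 <= k < n.+1)
    harmonic k * gbinom ((m + n)%N%:Z - k%:Z - 1) (n - k) = harmonic_conv m n.
  apply: eq_big_nat => k /andP[_ le_kn]; congr (_ * _).
  rewrite subzn; last by lia.
  by apply: gbinom_subz1; lia.
rewrite harmonic_conv_gap /harmonic_gap !gbinom_nat addnC.
have -> : 'C(n + m, n) = 'C(n + m, m) by rewrite -[RHS]bin_sub ?leq_addl // addnK.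
ring.
Qed.
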